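(* Let $(G,\varphi)$ be a complex unit gain graph, let $u$ be a cut vertex of $G$, and let $H$ be a connected component of $G-u$. If $r(H,\varphi)=r(H+u,\varphi)$, then $r(G,\varphi)=r(H,\varphi)+r(G-V(H),\varphi)$.
   Context: A complex unit gain graph $(G,\varphi)$ is a simple finite graph $G$ with a gain function $\varphi$ assigning to each oriented edge $e_{ij}$ a complex number of modulus $1$ with $\varphi(e_{ji})=\overline{\varphi(e_{ij})}$. Its adjacency matrix $A(G,\varphi)$ has $(i,j)$-entry $\varphi(e_{ij})$ if $v_i,v_j$ are adjacent and $0$ otherwise; $r(G,\varphi)$ is its rank. For an induced subgraph $K$ of $G$, $(K,\varphi)$ denotes $K$ with the restriction of $\varphi$. $H+u$ denotes the subgraph of $G$ induced by $V(H)\cup\{u\}$, and $G-V(H)$ is obtained from $G$ by deleting all vertices of $H$ (so it contains $u$). *)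

From HB Require Import structures.
From mathcomp Require Import all_boot all_order all_algebra.
From mathcomp Require Import reals.
From mathcomp Require Import complex.
Set Implicit Arguments. Unset Strict Implicit. Unset Printing Implicit Defensive.
Import Order.TTheory GRing.Theory Num.Theory.
Local Open Scope ring_scope.

(* A complex unit gain graph on the finite vertex type T:
   [e] is the (symmetric, irreflexive) adjacency relation of the simple graph G,
   [phi x y] is the gain of the oriented edge from x to y, with values in
   C = R[i] (R a real field, e.g. the reals). *)
Definition is_cugg (R : realType) (T : finType) (e : rel T)
    (phi : T -> T -> R[i]) : Prop :=
  [/\ irreflexive e, symmetric e,
      (forall x y, e x y -> `|phi x y| = 1) &
      (forall x y, e x y -> phi y x = (phi x y)^*)].

Definition induced_rel (T : finType) (e : rel T) (S : {set T}) : rel T :=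
  fun x y => [&& x \in S, y \in S & e x y].

Definition components (T : finType) (e : rel T) (S : {set T}) : {set {set T}} :=
  [set [set y | connect (induced_rel e S) x y] | x in S].

Definition cut_vertex (T : finType) (e : rel T) (u : T) : bool :=
  (#|components e [set: T]| < #|components e (~: [set u])|)%N.

Definition adj_mx (R : realType) (T : finType) (e : rel T)
    (phi : T -> T -> R[i]) (S : {set T}) : 'M[R[i]]_#|S| :=
  \matrix_(i < #|S|, j < #|S|)
     (if e (enum_val i) (enum_val j) then phi (enum_val i) (enum_val j) else 0).

Definition gain_rank (R : realType) (T : finType) (e : rel T)
    (phi : T -> T -> R[i]) (S : {set T}) : nat :=
  \rank (adj_mx e phi S).

(* Let A be the adjacency matrix of G, and h, k, E the diagonal 0/1 projections
   onto H, onto V(G) - H and onto u.  As H is a component of G - u, every edge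
   leaving H ends at u, so hAk = hAE and kAh = EAh, and EAE = 0 as there are no
   loops.  The hypothesis r(H) = r(H + u) puts the row and the column of u in the
   adjacency matrix of H + u inside the row and column spaces of that of H, so
   unipotent row and column operations clear the off-diagonal blocks hAk and kAh.
   What remains is hAh + kAk, of rank r(H) + r(G - V(H)). *)

From HB Require Import structures.
From mathcomp Require Import all_boot all_order all_algebra.
From mathcomp Require Import reals.
From mathcomp Require Import complex.
Set Implicit Arguments. Unset Strict Implicit. Unset Printing Implicit Defensive.
Import Order.TTheory GRing.Theory Num.Theory.
Local Open Scope ring_scope.

Section MatrixRank.
Variable F : fieldType.

Lemma eq_mxrankMl_factor m n p (B : 'M[F]_(m, p)) (M : 'M[F]_(p, n)) :
  \rank (B *m M) = \rank M -> exists Y, M = Y *m (B *m M).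
Proof.
move=> eq_rk; have [_] := mxrank_leqif_sup (submxMl B M).
by rewrite eq_rk eqxx => /esym/submxP.
Qed.

Lemma eq_mxrankMr_factor m n p (M : 'M[F]_(m, p)) (C : 'M[F]_(p, n)) :
  \rank (M *m C) = \rank M -> exists X, M = M *m C *m X.
Proof.
rewrite -mxrank_tr -[\rank M]mxrank_tr trmx_mul => /eq_mxrankMl_factor[Y eY].
by exists Y^T; apply: trmx_inj; rewrite !trmx_mul trmxK.
Qed.

Lemma mxrank_tr_conj m n (P : 'M[F]_(m, n)) (M : 'M[F]_m) :
  row_free P -> \rank (P^T *m M *m P) = \rank M.
Proof.
move=> freeP; rewrite mxrankMfree // -mxrank_tr trmx_mul trmxK.
by rewrite mxrankMfree // mxrank_tr.
Qed.

Variable n : nat.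
Implicit Types (L M P : 'M[F]_n).

Lemma mxrank_mul_unitmx L M P :
  L \in unitmx -> P \in unitmx -> \rank (L *m M *m P) = \rank M.
Proof.
move=> uL uP; rewrite mxrankMfree ?row_free_unit //.
by rewrite (eqmxMfull _ (_ : row_full L)) // row_full_unit.
Qed.

Lemma unitmx1B_sqr0 M : M *m M = 0 -> 1%:M - M \in unitmx.
Proof.
move=> MM0; apply: (proj1 (@mulmx1_unit _ _ _ (1%:M + M) _)).
by rewrite mulmxBl mul1mx mulmxDr mulmx1 MM0 addr0 addrK.
Qed.

End MatrixRank.

Section ComplementaryProjections.
Variables (F : fieldType) (n : nat) (h k : 'M[F]_n).
Hypotheses (hh : h *m h = h) (hk1 : h + k = 1%:M).

Lemma compl_proj_mxE : k = 1%:M - h.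
Proof. by rewrite -hk1 addrC addKr. Qed.

Lemma mulmx_proj_compl : h *m k = 0.
Proof. by rewrite compl_proj_mxE mulmxBr mulmx1 hh subrr. Qed.

Lemma mulmx_compl_proj : k *m h = 0.
Proof. by rewrite compl_proj_mxE mulmxBl mul1mx hh subrr. Qed.

Lemma mulmx_compl_idem : k *m k = k.
Proof. by rewrite {1}compl_proj_mxE mulmxBl mul1mx mulmx_proj_compl subr0. Qed.

Lemma mxrank_proj_add X Y :
  \rank (h *m X *m h + k *m Y *m k)%R =
    (\rank (h *m X *m h) + \rank (k *m Y *m k))%N.
Proof.
set a := h *m X *m h; set d := k *m Y *m k.
have ak : a *m k = 0 by rewrite -mulmxA mulmx_proj_compl mulmx0.
have dk : d *m k = d by rewrite -mulmxA mulmx_compl_idem.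
have ha : h *m (a + d) = a.
  by rewrite mulmxDr !mulmxA hh mulmx_proj_compl !mul0mx addr0.
have kd : k *m (a + d) = d.
  by rewrite mulmxDr !mulmxA mulmx_compl_proj mulmx_compl_idem !mul0mx add0r.
apply/eqP; rewrite eqn_leq mxrank_add -mxrank_disjoint_sum; last first.
  apply/eqP; rewrite -submx0; apply/rV_subP => w.
  rewrite sub_capmx => /andP[/submxP[w1 ->] /submxP[w2 w1a]].
  suff -> : w1 *m a = 0 by rewrite sub0mx.
  by rewrite w1a -dk mulmxA -w1a -mulmxA ak mulmx0.
rewrite addsmxE (_ : col_mx a d = col_mx h k *m (a + d)) ?mxrankM_maxr //.
by rewrite mul_col_mx ha kd.
Qed.

Variables (A E : 'M[F]_n).
Hypotheses (EE : E *m E = E) (hE : h *m E = 0) (Eh : E *m h = 0).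

Lemma mxrank_corner_factor :
  \rank (h *m A *m h) = \rank ((h + E) *m A *m (h + E)) ->
  exists X Y, [/\ h *m A *m h *m X *m E = h *m A *m E,
                  E *m A *m h *m X *m E = E *m A *m E &
                  E *m A *m h = E *m Y *m (h *m A *m h)].
Proof.
set U := h + E; set M := U *m A *m U; set a := h *m A *m h => rk_aM.
have hU : h *m U = h by rewrite mulmxDr hh hE addr0.
have Uh : U *m h = h by rewrite mulmxDl hh Eh addr0.
have EU : E *m U = E by rewrite mulmxDr Eh EE add0r.
have UE : U *m E = E by rewrite mulmxDl hE EE add0r.
have sandwich (P Q : 'M_n) : P *m U = P -> U *m Q = Q -> P *m M *m Q = P *m A *m Q.
  by move=> PU UQ; rewrite /M !mulmxA PU -!mulmxA UQ mulmxA.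
have a_hMh : a = h *m (M *m h) by rewrite mulmxA sandwich.
have rk_Mh : \rank (M *m h) = \rank M.
  by apply/eqP; rewrite eqn_leq mxrankM_maxl -rk_aM a_hMh mxrankM_maxr.
have [Y eY] : exists Y, M *m h = Y *m a.
  by rewrite a_hMh; apply: eq_mxrankMl_factor; rewrite -a_hMh rk_aM rk_Mh.
have [X eX] := eq_mxrankMr_factor rk_Mh.
have factorX (P : 'M_n) : P *m U = P -> P *m A *m h *m X *m E = P *m A *m E.
  move=> PU; rewrite -(sandwich P h) // -(sandwich P E) //.
  by rewrite [in RHS]eX !mulmxA.
exists X, Y; split; [exact: factorX | exact: factorX |].
by rewrite -sandwich // -mulmxA eY mulmxA.
Qed.

Hypotheses (hAk : h *m A *m k = h *m A *m E) (kAh : k *m A *m h = E *m A *m h).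
Hypothesis EAE : E *m A *m E = 0.

Lemma mxrank_cut :
  \rank (h *m A *m h) = \rank ((h + E) *m A *m (h + E)) ->
  \rank A = (\rank (h *m A *m h) + \rank (k *m A *m k))%N.
Proof.
move=> /mxrank_corner_factor[X [Y [aXE cXE EAh]]].
set a := h *m A *m h in aXE EAh *; set b := h *m A *m k.
set c := k *m A *m h; set d := k *m A *m k.
have Ah : A *m h = a + c by rewrite -[A *m h]mul1mx -hk1 mulmxDl !mulmxA.
have hA : h *m A = a + b by rewrite -[h *m A]mulmx1 -hk1 mulmxDr.
have A_sum : A = a + c + (b + d).
  by rewrite -[A]mul1mx -[_ *m A]mulmx1 -hk1 mulmxDr !mulmxDl.
pose P := 1%:M - h *m X *m E; pose L := 1%:M - E *m Y *m h.
have unitP : P \in unitmx.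
  by apply: unitmx1B_sqr0; rewrite -!mulmxA (mulmxA E h) Eh mul0mx !mulmx0.
have unitL : L \in unitmx.
  by apply: unitmx1B_sqr0; rewrite -!mulmxA (mulmxA h E) hE mul0mx !mulmx0.
have AP : A *m P = A - b.
  rewrite mulmxBr mulmx1 !mulmxA Ah !mulmxDl aXE /c kAh cXE EAE addr0.
  by rewrite /b hAk.
have hb : h *m b = b by rewrite /b !mulmxA hh.
have LAP : L *m A *m P = a + d.
  rewrite -mulmxA AP mulmxBl mul1mx -!mulmxA mulmxBr hA hb addrK.
  rewrite mulmxA -EAh -kAh -/c A_sum.
  by rewrite (addrC b d) addrA addrK (addrAC a c d) addrK.
by rewrite -(mxrank_mul_unitmx A unitL unitP) LAP mxrank_proj_add.
Qed.

End ComplementaryProjections.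

Section VertexMatrices.
Variables (F : pzRingType) (T : finType).
Implicit Types (S : {set T}) (e : rel T) (phi : T -> T -> F).

Definition gain_adj_mx e phi : 'M[F]_#|T| :=
  \matrix_(i, j)
     (if e (enum_val i) (enum_val j) then phi (enum_val i) (enum_val j) else 0).

Definition set_proj_mx S : 'M[F]_#|T| := diag_mx (\row_i (enum_val i \in S)%:R).

Definition set_sel_mx S : 'M[F]_(#|S|, #|T|) :=
  rowsub (fun i => enum_rank (enum_val i)) 1%:M.

Lemma set_proj_mxE S M S' i j :
  (set_proj_mx S *m M *m set_proj_mx S') i j =
    (enum_val i \in S)%:R * M i j * (enum_val j \in S')%:R.
Proof. by rewrite mul_mx_diag mul_diag_mx !mxE. Qed.

Lemma set_proj_mxI S S' :
  set_proj_mx S *m set_proj_mx S' = set_proj_mx (S :&: S').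
Proof.
by rewrite mulmx_diag; congr diag_mx; apply/rowP => j; rewrite !mxE inE -natrM mulnb.
Qed.

Lemma set_proj_mx0 : set_proj_mx set0 = 0.
Proof. by apply/matrixP => i j; rewrite !mxE inE mul0rn. Qed.

Lemma set_proj_mxT : set_proj_mx [set: T] = 1%:M.
Proof. by apply/matrixP => i j; rewrite !mxE inE. Qed.

Lemma set_proj_mxU S S' : [disjoint S & S'] ->
  set_proj_mx (S :|: S') = set_proj_mx S + set_proj_mx S'.
Proof.
move=> /disjoint_setI0/setP dis; apply/matrixP => i j.
rewrite !mxE inE -mulrnDl -natrD; move: (dis (enum_val i)); rewrite !inE.
by case: (_ \in S) (_ \in S') => [] [].
Qed.

Lemma set_proj_mxC S : set_proj_mx S + set_proj_mx (~: S) = 1%:M.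
Proof. by rewrite -set_proj_mxU ?setUCr ?set_proj_mxT // disjoints_subset setCK. Qed.

Lemma set_sel_mx_mul_tr S : set_sel_mx S *m (set_sel_mx S)^T = 1%:M.
Proof.
rewrite trmx_mxsub trmx1 mul_rowsub_mx mul1mx; apply/matrixP => i j.
by rewrite !mxE (inj_eq enum_rank_inj) (inj_eq enum_val_inj).
Qed.

Lemma tr_set_sel_mx_mul S : (set_sel_mx S)^T *m set_sel_mx S = set_proj_mx S.
Proof.
apply/matrixP => a b; rewrite !mxE.
have rank_eq (x : T) (c : 'I_#|T|) : (enum_rank x == c) = (x == enum_val c).
  by rewrite -(inj_eq enum_val_inj) enum_rankK.
under eq_bigr => k _ do rewrite !mxE !rank_eq.
rewrite -(big_enum_val (fun x => (x == enum_val a)%:R * (x == enum_val b)%:R)).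
rewrite -(inj_eq enum_val_inj) big_mkcond (bigD1 (enum_val a)) //= eqxx mul1r.
rewrite big1 => [|x /negPf->]; last by rewrite mul0r if_same.
by rewrite addr0; case: (_ \in S); case: (_ == _).
Qed.

Lemma set_proj_adj_r e phi S S1 S2 :
  {in S, forall x y, e x y -> (y \in S1) = (y \in S2)} ->
  set_proj_mx S *m gain_adj_mx e phi *m set_proj_mx S1 =
    set_proj_mx S *m gain_adj_mx e phi *m set_proj_mx S2.
Proof.
move=> eq12; apply/matrixP => i j; rewrite !set_proj_mxE mxE.
case: (boolP (enum_val i \in S)) => [iS|_]; last by rewrite !mul0r.
by case: ifP => [/(eq12 _ iS)->|_]; rewrite ?mulr0 ?mul0r.
Qed.

Lemma set_proj_adj_l e phi S S1 S2 :
  {in S, forall y x, e x y -> (x \in S1) = (x \in S2)} ->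
  set_proj_mx S1 *m gain_adj_mx e phi *m set_proj_mx S =
    set_proj_mx S2 *m gain_adj_mx e phi *m set_proj_mx S.
Proof.
move=> eq12; apply/matrixP => i j; rewrite !set_proj_mxE mxE.
case: (boolP (enum_val j \in S)) => [jS|_]; last by rewrite !mulr0.
by case: ifP => [/(eq12 _ jS)->|_]; rewrite ?mulr0 ?mul0r.
Qed.

Lemma set_proj_adj_indep e phi S :
  {in S &, forall x y, ~~ e x y} ->
  set_proj_mx S *m gain_adj_mx e phi *m set_proj_mx S = 0.
Proof.
move=> indepS; apply/matrixP => i j; rewrite set_proj_mxE !mxE.
case: (boolP (enum_val i \in S)) => [iS|_]; last by rewrite !mul0r.
case: (boolP (enum_val j \in S)) => [jS|_]; last by rewrite !mulr0.
by rewrite (negPf (indepS _ _ iS jS)) mulr0 mul0r.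
Qed.

End VertexMatrices.

Arguments set_proj_mx {F T} S.
Arguments set_sel_mx {F T} S.

Lemma adj_mx_sel (R : realType) (T : finType) (e : rel T) (phi : T -> T -> R[i])
    (S : {set T}) :
  adj_mx e phi S = set_sel_mx S *m gain_adj_mx e phi *m (set_sel_mx S)^T.
Proof.
rewrite trmx_mxsub trmx1 mul_rowsub_mx mul1mx mulmx_colsub mulmx1.
by apply/matrixP => i j; rewrite !mxE !enum_rankK.
Qed.

Lemma gain_rankE (R : realType) (T : finType) (e : rel T) (phi : T -> T -> R[i])
    (S : {set T}) :
  gain_rank e phi S = \rank (set_proj_mx S *m gain_adj_mx e phi *m set_proj_mx S).
Proof.
have freeP : row_free (@set_sel_mx R[i] _ S).
  rewrite /row_free eqn_leq rank_leq_row.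
  rewrite (@mulmx1_min_rank _ _ _ _ _ 1%:M (set_sel_mx S)^T) //.
  by rewrite mul1mx set_sel_mx_mul_tr.
rewrite /gain_rank -tr_set_sel_mx_mul -(mxrank_tr_conj (adj_mx e phi S) freeP).
by rewrite adj_mx_sel !mulmxA.
Qed.

Section Components.
Variables (T : finType) (e : rel T).

Lemma connect_induced_mem (S : {set T}) x y :
  x \in S -> connect (induced_rel e S) x y -> y \in S.
Proof.
move=> xS /connectP[p + ->]; elim: p x xS => //= z p IHp x xS.
by case/andP=> /and3P[_ zS _]; exact: IHp.
Qed.

Lemma component_sub (S H : {set T}) : H \in components e S -> H \subset S.
Proof.
by case/imsetP=> x xS ->; apply/subsetP => y; rewrite inE; exact: connect_induced_mem.
Qed.

Lemma component_adj (S H : {set T}) x y :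
  H \in components e S -> x \in H -> e x y -> y \in S -> y \in H.
Proof.
case/imsetP=> z zS ->; rewrite !inE => zx exy yS.
apply: connect_trans (zx) (connect1 _).
by rewrite /induced_rel (connect_induced_mem zS zx) yS.
Qed.

Variables (u : T) (H : {set T}).
Hypothesis Hc : H \in components e (~: [set u]).

Lemma cut_component_notin : u \notin H.
Proof. by apply/negP => /(subsetP (component_sub Hc)); rewrite !inE eqxx. Qed.

Lemma cut_component_adj x y :
  x \in H -> e x y -> (y \in ~: H) = (y \in [set u]).
Proof.
move=> xH exy; rewrite in_setC in_set1; apply/idP/idP => [yH | /eqP->].
  by apply: contraR yH => yu; apply: component_adj Hc xH exy _; rewrite !inE.
exact: cut_component_notin.
Qed.

End Components.

Theorem lemma4p1 (R : realType) (T : finType) (e : rel T)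
    (phi : T -> T -> R[i]) (u : T) (H : {set T}) :
  is_cugg e phi ->
  cut_vertex e u ->
  H \in components e (~: [set u]) ->
  gain_rank e phi H = gain_rank e phi (u |: H) ->
  gain_rank e phi [set: T] = (gain_rank e phi H + gain_rank e phi (~: H))%N.
Proof.
move=> [irr sym _ _] _ Hc.
have disj_uH : [disjoint [set u] & H] by rewrite disjoints1 (cut_component_notin Hc).
rewrite !gain_rankE set_proj_mxT mul1mx mulmx1 set_proj_mxU // addrC.
apply: mxrank_cut.
- by rewrite set_proj_mxI setIid.
- exact: set_proj_mxC.
- by rewrite set_proj_mxI setIid.
- by rewrite set_proj_mxI setIC disjoint_setI0 ?set_proj_mx0.
- by rewrite set_proj_mxI disjoint_setI0 ?set_proj_mx0.
- by apply: set_proj_adj_r => x xH y; exact: cut_component_adj.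
- by apply: set_proj_adj_l => y yH x exy; apply: (cut_component_adj Hc yH); rewrite sym.
- by apply: set_proj_adj_indep => x y /set1P-> /set1P->; rewrite irr.
Qed.
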